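(* Consider tuples $(A,p,q_I,q_J,\langle S,\pi\rangle,\langle S',\pi'\rangle)$, where: - $A\subset\mathcal{A}$ is a firm; - $p$ is a full-support skill distribution; - $q_I,q_J$ are full-support perceptions with $q_I\succsim_{LR}q_J$; - $\langle S,\pi\rangle,\langle S',\pi'\rangle$ are signal structures with $\langle S',\pi'\rangle\succsim_G\langle S,\pi\rangle$. Consider the following five properties: (i) $A\subset\mathcal{A}_M$; (ii) $\langle S',\pi'\rangle$ is MLR; (iii) $q_I\succsim_{LR}p$; (iv) $p\succsim_{LR}q_J$; (v) $\langle S',\pi'\rangle$ is slightly more informative than $\langle S,\pi\rangle$ for firm $A$ at perceptions $q_I$ and $q_J$. For each $k\in\{\mathrm{(i)},\dots,\mathrm{(v)}\}$ there exists such a tuple (for some finite $\Theta\subset\mathbb{R}$ with $|\Theta|\ge2$) with three features: it violates property $k$; it satisfies the other four properties; and it violates $$W_A(p,q_I,\langle S',\pi'\rangle)-W_A(p,q_J,\langle S',\pi'\rangle)\le W_A(p,q_I,\langle S,\pi\rangle)-W_A(p,q_J,\langle S,\pi\rangle).$$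
   Context: Let $\Theta\subset\mathbb{R}$ be a finite set of skill types with $|\Theta|\ge2$. Tasks are vectors $a\in\mathcal{A}:=\mathbb{R}^\Theta$. A firm is a non-empty finite set $A\subset\mathcal{A}$. It is monotone if $A\subset\mathcal{A}_M:=\{a: a(\theta')>a(\theta)\text{ whenever }\theta'>\theta\}$. A signal structure $\langle S,\pi\rangle$ consists of a non-empty finite set $S$ and a map $\pi:S\times\Theta\to[0,1]$ with $\sum_s\pi(s|\theta)=1$, such that each $s$ has $\pi(s|\theta)>0$ for some $\theta$. Pay: - $p,q\in\Delta(\Theta)$ have full support. - $q_{\langle S,\pi\rangle}(\theta|s):=q(\theta)\pi(s|\theta)/\sum_{\theta'}q(\theta')\pi(s|\theta')$. - $w_A(s,q,\langle S,\pi\rangle):=\max_{a\in A}\sum_\theta q_{\langle S,\pi\rangle}(\theta|s)a(\theta)$. - $W_A(p,q,\langle S,\pi\rangle):=\sum_\theta p(\theta)\sum_s\pi(s|\theta)w_A(s,q,\langle S,\pi\rangle)$. Orders: - $q'\succsim_{LR}q$ means $q(\theta)q'(\theta')\ge q(\theta')q'(\theta)$ whenever $\theta'>\theta$. - $\langle S',\pi'\rangle\succsim_G\langle S,\pi\rangle$ means there exists a garbling kernel $g:S\times S'\to[0,1]$ with $\sum_s g(s|s')=1$ for each $s'$ and $\pi(s|\theta)=\sum_{s'}g(s|s')\pi'(s'|\theta)$ for all $s,\theta$. - $\langle S,\pi\rangle$ is MLR if $S\subset\mathbb{R}$ and $\pi(s|\theta)\pi(s'|\theta')\ge\pi(s|\theta')\pi(s'|\theta)$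 whenever $s'>s$, $\theta'>\theta$. Slightness: $\langle S',\pi'\rangle$ is slightly more informative than $\langle S,\pi\rangle$ for firm $A$ at perception $q$ if there is a garbling kernel $g$ from $\langle S',\pi'\rangle$ to $\langle S,\pi\rangle$ such that, for all $s\in S$, $s'\in S'$ with $g(s|s')>0$, $$\arg\max_{a\in A}\sum_\theta q_{\langle S,\pi\rangle}(\theta|s)a(\theta)\cap\arg\max_{a\in A}\sum_\theta q_{\langle S',\pi'\rangle}(\theta|s')a(\theta)\neq\varnothing.$$ *)

From HB Require Import structures.
From mathcomp Require Import all_boot all_order all_algebra.
From mathcomp Require Import finmap.
From mathcomp Require Import Rstruct.
From Stdlib Require Import Rdefinitions.

Set Implicit Arguments.
Unset Strict Implicit.
Unset Printing Implicit Defensive.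

Import Order.TTheory GRing.Theory Num.Theory.
Local Open Scope ring_scope.
Local Open Scope fset_scope.

Notation real := Rdefinitions.R.

Section Model.
Variable Theta : {fset real}.

Definition task := {ffun Theta -> real}.

Definition firm (A : {fset task}) : Prop := A != fset0.

Definition monotone_firm (A : {fset task}) : Prop :=
  forall a, a \in A -> forall t t' : Theta, val t < val t' -> a t < a t'.

Definition full_support (p : Theta -> real) : Prop :=
  (forall t, 0 < p t) /\ \sum_(t : Theta) p t = 1.

Definition LR_ge (q' q : Theta -> real) : Prop :=
  forall t t' : Theta, val t < val t' -> q t' * q' t <= q t * q' t'.

Definition signal_structure (S : {fset real}) (pi : S -> Theta -> real) : Prop :=
  [/\ forall s t, 0 <= pi s t <= 1,
      forall t, \sum_(s : S) pi s t = 1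
    & forall s, exists t, 0 < pi s t].

Definition posterior (S : {fset real}) (q : Theta -> real)
  (pi : S -> Theta -> real) (s : S) (t : Theta) : real :=
  q t * pi s t / \sum_(t' : Theta) q t' * pi s t'.

Definition expval (b : Theta -> real) (a : task) : real :=
  \sum_(t : Theta) b t * a t.

(* max over a in A (A non-empty; the default value is attained by the
   head of A, hence irrelevant). *)
Definition maxA (A : {fset task}) (F : task -> real) : real :=
  \big[Num.max/F (head [ffun=> 0] A)]_(a <- A) F a.

Definition wage (A : {fset task}) (S : {fset real}) (q : Theta -> real)
  (pi : S -> Theta -> real) (s : S) : real :=
  maxA A (expval (posterior q pi s)).

Definition Wage (A : {fset task}) (p q : Theta -> real) (S : {fset real})
  (pi : S -> Theta -> real) : real :=
  \sum_(t : Theta) p t * \sum_(s : S) pi s t * wage A q pi s.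

Definition garbling_kernel (S S' : {fset real}) (pi : S -> Theta -> real)
  (pi' : S' -> Theta -> real) (g : S -> S' -> real) : Prop :=
  [/\ forall s s', 0 <= g s s' <= 1,
      forall s', \sum_(s : S) g s s' = 1
    & forall s t, pi s t = \sum_(s' : S') g s s' * pi' s' t].

Definition blackwell_ge (S' : {fset real}) (pi' : S' -> Theta -> real)
  (S : {fset real}) (pi : S -> Theta -> real) : Prop :=
  exists g, garbling_kernel pi pi' g.

Definition MLR (S : {fset real}) (pi : S -> Theta -> real) : Prop :=
  forall (s s' : S) (t t' : Theta), val s < val s' -> val t < val t' ->
    pi s t' * pi s' t <= pi s t * pi s' t'.

Definition is_argmax (A : {fset task}) (b : Theta -> real) (a : task) : Prop :=
  a \in A /\ forall a', a' \in A -> expval b a' <= expval b a.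

Definition slightly_more_inf (A : {fset task}) (q : Theta -> real)
  (S' : {fset real}) (pi' : S' -> Theta -> real)
  (S : {fset real}) (pi : S -> Theta -> real) : Prop :=
  exists g, garbling_kernel pi pi' g /\
    forall (s : S) (s' : S'), 0 < g s s' ->
      exists a, is_argmax A (posterior q pi s) a /\
                is_argmax A (posterior q pi' s') a.

(* The five properties (i)-(v), indexed 0..4. *)
Definition property (k : nat) (A : {fset task}) (p qI qJ : Theta -> real)
  (S : {fset real}) (pi : S -> Theta -> real)
  (S' : {fset real}) (pi' : S' -> Theta -> real) : Prop :=
  match k with
  | 0 => monotone_firm A
  | 1 => MLR pi'
  | 2 => LR_ge qI p
  | 3 => LR_ge p qJ
  | _ => slightly_more_inf A qI pi' pi /\ slightly_more_inf A qJ pi' pi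
  end.

End Model.

(* Every experiment is a garbling of the uninformative one [null_signal],
   under which a worker of perception q is paid the prior optimum
   [maxA A (expval q)]; and for a single-task firm every experiment is
   slightly more informative than it.  So each counterexample takes the
   uninformative experiment as the coarse one, and it only remains to exhibit
   explicit two- or three-type data violating the chosen property for which
   the finer experiment widens the wage gap between the perceptions. *)

From Pilot Require Import Defs.
From HB Require Import structures.
From mathcomp Require Import all_boot all_order all_algebra.
From mathcomp Require Import finmap.
From mathcomp Require Import Rstruct.
From mathcomp Require Import ring lra.

Set Implicit Arguments.
Unset Strict Implicit.
Unset Printing Implicit Defensive.

Import Order.TTheory GRing.Theory Num.Theory.
Local Open Scope fset_scope.
Local Open Scope ring_scope.

Section Wages.
Variable Theta : {fset real}.
Implicit Types (A : {fset task Theta}) (F G : task Theta -> real) (a b : task Theta).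
Implicit Types (p q : Theta -> real).

Lemma maxA_dominant A F a :
  a \in A -> (forall b, b \in A -> F b <= F a) -> Defs.maxA A F = F a.
Proof.
move=> aA Fa; apply/le_anti; rewrite {2}/Defs.maxA le_bigmax_seq ?andbT //.
have headA : head [ffun=> 0] A \in A.
  have : a \in enum_fset A by [].
  case E : (enum_fset A) => [|x s] // _.
  by rewrite -[_ \in A]/(_ \in enum_fset A) E mem_head.
by rewrite /Defs.maxA big_seq bigmax_le ?Fa.
Qed.

Lemma eq_maxA A F G : F =1 G -> Defs.maxA A F = Defs.maxA A G.
Proof. by move=> FG; rewrite /Defs.maxA FG; apply: eq_bigr => a _. Qed.

Lemma maxA_fset1 a F : Defs.maxA [fset a] F = F a.
Proof. by apply: maxA_dominant => [|b /fset1P ->]; rewrite ?fset11. Qed.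

Lemma maxA_fset2l a b F : F b <= F a -> Defs.maxA [fset a; b] F = F a.
Proof.
by move=> ba; apply: maxA_dominant => [|c /fset2P [] ->]; rewrite ?fset21.
Qed.

Lemma maxA_fset2r a b F : F a <= F b -> Defs.maxA [fset a; b] F = F b.
Proof.
by move=> ab; apply: maxA_dominant => [|c /fset2P [] ->]; rewrite ?fset22.
Qed.

Lemma posteriorE (S : {fset real}) q (pi : S -> Theta -> real) s t :
  posterior q pi s t = q t * pi s t / \sum_t' q t' * pi s t'.
Proof. by []. Qed.

Lemma expval_posterior (S : {fset real}) q (pi : S -> Theta -> real) s a :
  expval (posterior q pi s) a =
  (\sum_t q t * pi s t * a t) / \sum_t q t * pi s t.
Proof.
by rewrite /expval /posterior mulr_suml; apply: eq_bigr => t _; rewrite mulrAC.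
Qed.

Lemma ler_expval_posterior (S : {fset real}) q (pi : S -> Theta -> real) s a b :
  0 < \sum_t q t * pi s t ->
  (expval (posterior q pi s) a <= expval (posterior q pi s) b) =
  (\sum_t q t * pi s t * a t <= \sum_t q t * pi s t * b t).
Proof. by move=> pos; rewrite !expval_posterior ler_pM2r ?invr_gt0. Qed.

Definition null_signal (s : [fset (0 : real)]) (t : Theta) : real := 1.

Lemma null_signal_structure : Theta != fset0 -> signal_structure null_signal.
Proof.
case/fset0Pn=> t0 t0Theta; split=> [s t|t|s]; first by rewrite ler01 lexx.
  by rewrite big_fset1.
by exists [` t0Theta]; rewrite ltr01.
Qed.

Lemma garbling_kernel_null (S' : {fset real}) (pi' : S' -> Theta -> real) :
  (forall t, \sum_s pi' s t = 1) -> garbling_kernel null_signal pi' (fun _ _ => 1).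
Proof.
move=> pi'1; split=> [s s'|s'|s t]; first by rewrite ler01 lexx.
  by rewrite big_fset1.
by rewrite /null_signal (eq_bigr (pi'^~ t)) ?pi'1 // => s' _; rewrite mul1r.
Qed.

Lemma posterior_null q s t : \sum_t q t = 1 -> posterior q null_signal s t = q t.
Proof.
move=> q1; rewrite posteriorE /null_signal (eq_bigr q) => [|t' _]; last exact: mulr1.
by rewrite q1 mulr1 divr1.
Qed.

Lemma expval_posterior_null q s a :
  \sum_t q t = 1 -> expval (posterior q null_signal s) a = expval q a.
Proof. by move=> q1; apply: eq_bigr => t _; rewrite posterior_null. Qed.

Lemma Wage_null A p q : \sum_t p t = 1 -> \sum_t q t = 1 ->
  Wage A p q null_signal = Defs.maxA A (expval q).
Proof.
move=> p1 q1; rewrite /Wage /wage.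
under eq_bigr => t _ do rewrite big_fset1 /null_signal mul1r.
by rewrite -mulr_suml p1 mul1r; apply: eq_maxA => a; exact: expval_posterior_null.
Qed.

Lemma is_argmax_fset1 q a : is_argmax [fset a] q a.
Proof. by split=> [|b /fset1P ->]; rewrite ?fset11. Qed.

Lemma slightly_more_inf_null_fset1 a q (S' : {fset real}) (pi' : S' -> Theta -> real) :
  (forall t, \sum_s pi' s t = 1) -> slightly_more_inf [fset a] q pi' null_signal.
Proof.
move=> pi'1; exists (fun _ _ => 1); split; first exact: garbling_kernel_null.
by move=> s s' _; exists a; split; exact: is_argmax_fset1.
Qed.

Lemma slightly_more_inf_null_argmax A q (S' : {fset real}) (pi' : S' -> Theta -> real) :
  \sum_t q t = 1 -> slightly_more_inf A q pi' null_signal ->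
  forall s', exists a, is_argmax A q a /\ is_argmax A (posterior q pi' s') a.
Proof.
move=> q1 [g [[_ g1 _] common]] s'.
have g_pos : 0 < g [` fset11 0] s'.
  by move: (g1 s'); rewrite big_fset1 => ->; exact: ltr01.
have [a [[aA a_null] a_fine]] := common _ _ g_pos.
exists a; split=> //; split=> // b bA.
by have := a_null b bA; rewrite !expval_posterior_null.
Qed.

End Wages.

Arguments null_signal {Theta}.

Definition counterexample_exists (k : nat) : Prop :=
  exists (Theta : {fset real}), (2 <= #|` Theta|)%N /\
  exists (A : {fset task Theta}) (p qI qJ : Theta -> real)
         (S : {fset real}) (pi : S -> Theta -> real)
         (S' : {fset real}) (pi' : S' -> Theta -> real),
    [/\ firm A, full_support p, full_support qI, full_support qJ
      & LR_ge qI qJ] /\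
    [/\ signal_structure pi, signal_structure pi' & blackwell_ge pi' pi] /\
    ~ property k A p qI qJ pi pi' /\
    (forall j : nat, (j < 5)%N -> j <> k -> property j A p qI qJ pi pi') /\
    ~ (Wage A p qI pi' - Wage A p qJ pi' <= Wage A p qI pi - Wage A p qJ pi).

Lemma counterexample_against_null k (Theta : {fset real}) (A : {fset task Theta})
    (p qI qJ : Theta -> real) (S' : {fset real}) (pi' : S' -> Theta -> real) :
  (2 <= #|` Theta|)%N -> firm A ->
  full_support p -> full_support qI -> full_support qJ -> LR_ge qI qJ ->
  signal_structure pi' ->
  ~ property k A p qI qJ null_signal pi' ->
  (forall j, (j < 5)%N -> j <> k -> property j A p qI qJ null_signal pi') ->
  Defs.maxA A (expval qI) - Defs.maxA A (expval qJ) <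
    Wage A p qI pi' - Wage A p qJ pi' ->
  counterexample_exists k.
Proof.
move=> Theta2 firmA pS qIS qJS qIJ pi'S notk others gain.
move: (pS) (qIS) (qJS) => [_ p1] [_ qI1] [_ qJ1].
have pi'1 : forall t, \sum_s pi' s t = 1 by case: pi'S.
exists Theta; split=> //; exists A, p, qI, qJ, _, null_signal, S', pi'.
split; first by split.
split; first split.
- by apply: null_signal_structure; rewrite -cardfs_gt0 (leq_trans _ Theta2).
- exact: pi'S.
- by exists (fun _ _ => 1); exact: garbling_kernel_null.
do 2!split=> //.
by apply/negP; rewrite -ltNge !Wage_null.
Qed.

Definition set01 : {fset real} := [fset 0; 1].
Definition set012 : {fset real} := [fset 0; 1; 2].

Fact set01_0 : (0 : real) \in set01. Proof. exact: fset21. Qed.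
Fact set01_1 : (1 : real) \in set01. Proof. exact: fset22. Qed.
Fact set012_0 : (0 : real) \in set012. Proof. by rewrite !inE eqxx. Qed.
Fact set012_1 : (1 : real) \in set012. Proof. by rewrite !inE eqxx orbT. Qed.
Fact set012_2 : (2 : real) \in set012. Proof. by rewrite !inE eqxx orbT. Qed.

Definition lo : set01 := [` set01_0].
Definition hi : set01 := [` set01_1].
Definition lo3 : set012 := [` set012_0].
Definition mid3 : set012 := [` set012_1].
Definition hi3 : set012 := [` set012_2].

Lemma set01P (t : set01) : t = lo \/ t = hi.
Proof.
case: t => x xT; have : (x == 0) || (x == 1) by move: xT; rewrite !inE.
by case/orP=> /eqP xE; [left|right]; exact: val_inj.
Qed.

Lemma set012P (t : set012) : [\/ t = lo3, t = mid3 | t = hi3].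
Proof.
case: t => x xT.
have : [|| x == 0, x == 1 | x == 2] by move: xT; rewrite !inE -orbA.
by case/or3P=> /eqP xE; [apply: Or31|apply: Or32|apply: Or33]; exact: val_inj.
Qed.

Lemma big_set01 (R : nmodType) (F : set01 -> R) : \sum_t F t = F lo + F hi.
Proof.
have hi_lo : hi != lo by apply/eqP => /(congr1 val)/eqP; rewrite oner_eq0.
rewrite (bigD1 lo) //= (bigD1 hi) //= big1 ?addr0 // => t.
by case: (set01P t) => ->; rewrite eqxx ?andbF.
Qed.

Lemma big_set012 (R : nmodType) (F : set012 -> R) :
  \sum_t F t = F lo3 + F mid3 + F hi3.
Proof.
have neq (x y : set012) : val x != val y -> x != y by apply: contra => /eqP ->.
have mid_lo : mid3 != lo3 by apply: neq; rewrite /= oner_eq0.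
have hi_lo : hi3 != lo3 by apply: neq; rewrite /= pnatr_eq0.
have hi_mid : hi3 != mid3 by apply: neq; rewrite /= (eqr_nat real 2 1).
rewrite (bigD1 lo3) //= (bigD1 mid3) //= (bigD1 hi3) /= ?hi_lo //.
rewrite big1 ?addr0 ?addrA //.
by move=> t; case: (set012P t) => ->; rewrite eqxx ?andbF.
Qed.

Definition big_levelsE := (big_set01, big_set012).

Definition fun01 (c0 c1 : real) (t : set01) : real := if val t == 0 then c0 else c1.
Definition fun012 (c0 c1 c2 : real) (t : set012) : real :=
  if val t == 0 then c0 else if val t == 1 then c1 else c2.

Lemma fun01_lo c0 c1 : fun01 c0 c1 lo = c0.
Proof. by rewrite /fun01 /= eqxx. Qed.
Lemma fun01_hi c0 c1 : fun01 c0 c1 hi = c1.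
Proof. by rewrite /fun01 /= oner_eq0. Qed.
Lemma fun012_lo c0 c1 c2 : fun012 c0 c1 c2 lo3 = c0.
Proof. by rewrite /fun012 /= eqxx. Qed.
Lemma fun012_mid c0 c1 c2 : fun012 c0 c1 c2 mid3 = c1.
Proof. by rewrite /fun012 /= oner_eq0 eqxx. Qed.
Lemma fun012_hi c0 c1 c2 : fun012 c0 c1 c2 hi3 = c2.
Proof. by rewrite /fun012 /= pnatr_eq0 (eqr_nat real 2 1). Qed.

Definition fun_levelsE :=
  (fun01_lo, fun01_hi, fun012_lo, fun012_mid, fun012_hi, ffunE).

Lemma card_set01 : (2 <= #|` set01|)%N.
Proof. by rewrite cardfs2 eq_sym oner_eq0. Qed.

Lemma card_set012 : (2 <= #|` set012|)%N.
Proof.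
apply: leq_trans card_set01 (fsubset_leq_card _).
by apply/fsubsetP => x; rewrite !inE => ->.
Qed.

Lemma full_support_fun01 (c0 c1 : real) :
  0 < c0 -> 0 < c1 -> c0 + c1 = 1 -> full_support (fun01 c0 c1).
Proof.
move=> ? ? ?; split; last by rewrite big_set01 !fun_levelsE.
by move=> t; case: (set01P t) => ->; rewrite fun_levelsE.
Qed.

Lemma full_support_fun012 (c0 c1 c2 : real) :
  0 < c0 -> 0 < c1 -> 0 < c2 -> c0 + c1 + c2 = 1 -> full_support (fun012 c0 c1 c2).
Proof.
move=> ? ? ? ?; split; last by rewrite big_set012 !fun_levelsE.
by move=> t; case: (set012P t) => ->; rewrite fun_levelsE.
Qed.

Ltac by_levels := repeat match goal with
  | t : fset_sub_type set01 |- _ => case: (set01P t) => ->; clear t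
  | t : fset_sub_type set012 |- _ => case: (set012P t) => ->; clear t
  end; rewrite /= ?fun_levelsE; move=> *; lra.

Ltac eval_Wage_fset1 := rewrite /Wage /wage !big_levelsE ?maxA_fset1
  !expval_posterior !big_levelsE /= ?fun_levelsE; field.

(* Full information pays both perceptions E_p[a] = 1/2, whereas without
   information the decreasing task favours the pessimistic perception qJ. *)
Module NonMonotoneFirm.
Definition a : task set01 := [ffun t => fun01 1 0 t].
Definition p := fun01 (1/2) (1/2).
Definition qI := fun01 (1/3) (2/3).
Definition qJ := fun01 (2/3) (1/3).
Definition pi' (s t : set01) : real := fun01 (fun01 1 0 t) (fun01 0 1 t) s.
Ltac unfold_data := rewrite /a /p /qI /qJ /pi'.

Lemma counterexample : counterexample_exists 0.
Proof.
have pi'1 t : \sum_s pi' s t = 1 by rewrite big_set01; unfold_data; by_levels.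
apply: (@counterexample_against_null _ _ [fset a] p qI qJ _ pi').
- exact: card_set01.
- by apply/fset0Pn; exists a; rewrite fset11.
- apply: full_support_fun01; lra.
- apply: full_support_fun01; lra.
- apply: full_support_fun01; lra.
- by move=> t t'; unfold_data; by_levels.
- split=> // [s t|s]; first by apply/andP; split; unfold_data; by_levels.
  by case: (set01P s) => ->; [exists lo|exists hi]; unfold_data; by_levels.
- move=> /(_ a (fset11 a) lo hi) /=; unfold_data; by_levels.
- case=> [|[|[|[|[|]]]]] // _ _; rewrite /property.
  + by move=> s s' t t'; unfold_data; by_levels.
  + by move=> t t'; unfold_data; by_levels.
  + by move=> t t'; unfold_data; by_levels.
  + by split; apply: slightly_more_inf_null_fset1.
- have -> : Wage [fset a] p qI pi' = 1/2 by unfold_data; eval_Wage_fset1.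
  have -> : Wage [fset a] p qJ pi' = 1/2 by unfold_data; eval_Wage_fset1.
  rewrite !maxA_fset1 /expval !big_set01; unfold_data; by_levels.
Qed.
End NonMonotoneFirm.

(* As qI = p, information cannot move I's wage; the signal lo, sent by the
   lowest and the highest type, lowers J's. *)
Module NonMLRSignal.
Definition a : task set012 := [ffun t => fun012 0 1 2 t].
Definition p := fun012 (1/3) (1/3) (1/3).
Definition qI := fun012 (1/3) (1/3) (1/3).
Definition qJ := fun012 (1/2) (1/4) (1/4).
Definition pi' (s : set01) (t : set012) : real :=
  fun01 (fun012 (3/4) 0 1 t) (fun012 (1/4) 1 0 t) s.
Ltac unfold_data := rewrite /a /p /qI /qJ /pi'.

Lemma counterexample : counterexample_exists 1.
Proof.
have pi'1 t : \sum_s pi' s t = 1 by rewrite big_set01; unfold_data; by_levels.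
apply: (@counterexample_against_null _ _ [fset a] p qI qJ _ pi').
- exact: card_set012.
- by apply/fset0Pn; exists a; rewrite fset11.
- apply: full_support_fun012; lra.
- apply: full_support_fun012; lra.
- apply: full_support_fun012; lra.
- by move=> t t'; unfold_data; by_levels.
- split=> // [s t|s]; first by apply/andP; split; unfold_data; by_levels.
  by exists lo3; unfold_data; by_levels.
- move=> /(_ lo hi mid3 hi3) /=; unfold_data; by_levels.
- case=> [|[|[|[|[|]]]]] // _ _; rewrite /property.
  + by move=> b /fset1P -> t t'; unfold_data; by_levels.
  + by move=> t t'; unfold_data; by_levels.
  + by move=> t t'; unfold_data; by_levels.
  + by split; apply: slightly_more_inf_null_fset1.
- have -> : Wage [fset a] p qI pi' = 1 by unfold_data; eval_Wage_fset1.
  have -> : Wage [fset a] p qJ pi' = 67/90 by unfold_data; eval_Wage_fset1.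
  rewrite !maxA_fset1 /expval !big_set012; unfold_data; by_levels.
Qed.
End NonMLRSignal.

Module PerceptionINotAboveSkills.
Definition a : task set01 := [ffun t => fun01 0 1 t].
Definition p := fun01 (1/2) (1/2).
Definition qI := fun01 (3/4) (1/4).
Definition qJ := fun01 (4/5) (1/5).
Definition pi' (s t : set01) : real := fun01 (fun01 (1/3) 0 t) (fun01 (2/3) 1 t) s.
Ltac unfold_data := rewrite /a /p /qI /qJ /pi'.

Lemma counterexample : counterexample_exists 2.
Proof.
have pi'1 t : \sum_s pi' s t = 1 by rewrite big_set01; unfold_data; by_levels.
apply: (@counterexample_against_null _ _ [fset a] p qI qJ _ pi').
- exact: card_set01.
- by apply/fset0Pn; exists a; rewrite fset11.
- apply: full_support_fun01; lra.
- apply: full_support_fun01; lra.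
- apply: full_support_fun01; lra.
- by move=> t t'; unfold_data; by_levels.
- split=> // [s t|s]; first by apply/andP; split; unfold_data; by_levels.
  by case: (set01P s) => ->; [exists lo|exists hi]; unfold_data; by_levels.
- move=> /(_ lo hi) /=; unfold_data; by_levels.
- case=> [|[|[|[|[|]]]]] // _ _; rewrite /property.
  + by move=> b /fset1P -> t t'; unfold_data; by_levels.
  + by move=> s s' t t'; unfold_data; by_levels.
  + by move=> t t'; unfold_data; by_levels.
  + by split; apply: slightly_more_inf_null_fset1.
- have -> : Wage [fset a] p qI pi' = 5/18 by unfold_data; eval_Wage_fset1.
  have -> : Wage [fset a] p qJ pi' = 5/22 by unfold_data; eval_Wage_fset1.
  rewrite !maxA_fset1 /expval !big_set01; unfold_data; by_levels.
Qed.
End PerceptionINotAboveSkills.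

Module SkillsNotAbovePerceptionJ.
Definition a : task set01 := [ffun t => fun01 0 1 t].
Definition p := fun01 (4/5) (1/5).
Definition qI := fun01 (1/4) (3/4).
Definition qJ := fun01 (1/3) (2/3).
Definition pi' (s t : set01) : real := fun01 (fun01 1 (1/2) t) (fun01 0 (1/2) t) s.
Ltac unfold_data := rewrite /a /p /qI /qJ /pi'.

Lemma counterexample : counterexample_exists 3.
Proof.
have pi'1 t : \sum_s pi' s t = 1 by rewrite big_set01; unfold_data; by_levels.
apply: (@counterexample_against_null _ _ [fset a] p qI qJ _ pi').
- exact: card_set01.
- by apply/fset0Pn; exists a; rewrite fset11.
- apply: full_support_fun01; lra.
- apply: full_support_fun01; lra.
- apply: full_support_fun01; lra.
- by move=> t t'; unfold_data; by_levels.
- split=> // [s t|s]; first by apply/andP; split; unfold_data; by_levels.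
  by exists hi; case: (set01P s) => ->; unfold_data; by_levels.
- move=> /(_ lo hi) /=; unfold_data; by_levels.
- case=> [|[|[|[|[|]]]]] // _ _; rewrite /property.
  + by move=> b /fset1P -> t t'; unfold_data; by_levels.
  + by move=> s s' t t'; unfold_data; by_levels.
  + by move=> t t'; unfold_data; by_levels.
  + by split; apply: slightly_more_inf_null_fset1.
- have -> : Wage [fset a] p qI pi' = 16/25 by unfold_data; eval_Wage_fset1.
  have -> : Wage [fset a] p qJ pi' = 11/20 by unfold_data; eval_Wage_fset1.
  rewrite !maxA_fset1 /expval !big_set01; unfold_data; by_levels.
Qed.
End SkillsNotAbovePerceptionJ.

(* The safe task a2 is optimal a priori, but after the signal hi perception
   qI prefers a1, so no garbling keeps a common optimal task; this switch
   raises I's wage by more than J's, who keeps a2. *)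
Module NotSlightlyMoreInformative.
Definition a1 : task set01 := [ffun t => fun01 0 1 t].
Definition a2 : task set01 := [ffun t => fun01 (1/2) (3/4) t].
Definition A := [fset a1; a2].
Definition p := fun01 (1/2) (1/2).
Definition qI := fun01 (1/2) (1/2).
Definition qJ := fun01 (3/4) (1/4).
Definition pi' (s t : set01) : real := fun01 (fun01 (3/4) 0 t) (fun01 (1/4) 1 t) s.
Ltac unfold_data := rewrite /a1 /a2 /p /qI /qJ /pi'.

Ltac compare_tasks :=
  rewrite ?ler_expval_posterior /expval !big_set01; unfold_data; by_levels.

Ltac eval_wage := rewrite /wage; first
  [ rewrite maxA_fset2l; last by compare_tasks
  | rewrite maxA_fset2r; last by compare_tasks ];
  rewrite expval_posterior !big_set01; unfold_data; rewrite /= ?fun_levelsE; field.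

Lemma counterexample : counterexample_exists 4.
Proof.
have pi'1 t : \sum_s pi' s t = 1 by rewrite big_set01; unfold_data; by_levels.
apply: (@counterexample_against_null _ _ A p qI qJ _ pi').
- exact: card_set01.
- by apply/fset0Pn; exists a1; rewrite fset21.
- apply: full_support_fun01; lra.
- apply: full_support_fun01; lra.
- apply: full_support_fun01; lra.
- by move=> t t'; unfold_data; by_levels.
- split=> // [s t|s]; first by apply/andP; split; unfold_data; by_levels.
  by case: (set01P s) => ->; [exists lo|exists hi]; unfold_data; by_levels.
- have [_ qI1] : full_support qI by apply: full_support_fun01; lra.
  case=> /(slightly_more_inf_null_argmax qI1)/(_ hi) [b [[+ b_null] [_ b_fine]]] _.
  case/fset2P=> bE; subst b.
  + by move: (b_null a2 (fset22 _ _)); compare_tasks.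
  + by move: (b_fine a1 (fset21 _ _)); compare_tasks.
- case=> [|[|[|[|[|]]]]] // _ _; rewrite /property.
  + by move=> b /fset2P [] -> t t'; unfold_data; by_levels.
  + by move=> s s' t t'; unfold_data; by_levels.
  + by move=> t t'; unfold_data; by_levels.
  + by move=> t t'; unfold_data; by_levels.
- have wI_lo : wage A qI pi' lo = 1/2 by eval_wage.
  have wI_hi : wage A qI pi' hi = 4/5 by eval_wage.
  have wJ_lo : wage A qJ pi' lo = 1/2 by eval_wage.
  have wJ_hi : wage A qJ pi' hi = 9/14 by eval_wage.
  rewrite /Wage !big_set01 wI_lo wI_hi wJ_lo wJ_hi.
  by rewrite !maxA_fset2r; compare_tasks.
Qed.
End NotSlightlyMoreInformative.

Theorem proposition2 :
  forall k : nat, (k < 5)%N ->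
  exists (Theta : {fset real}), (2 <= #|` Theta|)%N /\
  exists (A : {fset task Theta}) (p qI qJ : Theta -> real)
         (S : {fset real}) (pi : S -> Theta -> real)
         (S' : {fset real}) (pi' : S' -> Theta -> real),
    [/\ firm A, full_support p, full_support qI, full_support qJ
      & LR_ge qI qJ] /\
    [/\ signal_structure pi, signal_structure pi' & blackwell_ge pi' pi] /\
    ~ property k A p qI qJ pi pi' /\
    (forall j : nat, (j < 5)%N -> j <> k -> property j A p qI qJ pi pi') /\
    ~ (Wage A p qI pi' - Wage A p qJ pi' <= Wage A p qI pi - Wage A p qJ pi).
Proof.
case=> [|[|[|[|[|k]]]]] // _.
- exact: NonMonotoneFirm.counterexample.
- exact: NonMLRSignal.counterexample.
- exact: PerceptionINotAboveSkills.counterexample.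
- exact: SkillsNotAbovePerceptionJ.counterexample.
- exact: NotSlightlyMoreInformative.counterexample.
Qed.
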